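(* Let $\mathcal{A}$ be a probabilistic automaton with state set $Q$. Its Markov monoid is consistent with $\mathcal{A}$: for every limit-word $\mathbf{u}$ in the Markov monoid of $\mathcal{A}$ there exists a sequence of words $(u_n)_{n\in\mathbb{N}}$ which reifies $\mathbf{u}$, i.e. for all states $s,t\in Q$ the sequence $(\mathbb{P}_{\mathcal{A}}(s\xrightarrow{u_n}t))_{n}$ converges and $\mathbf{u}(s,t)=1 \iff \lim_n \mathbb{P}_{\mathcal{A}}(s\xrightarrow{u_n}t)>0$.
   Context: Fix a finite alphabet $A$. A probabilistic automaton is $\mathcal{A}=(Q,q_0,\Delta,F)$ with $Q$ finite, $q_0\in Q$, $F\subseteq Q$ and $\Delta: Q\times A\to\mathcal{D}(Q)$ ($\mathcal{D}(Q)$ the probability distributions on $Q$). For $a\in A$ let $M_a(s,t)=\Delta(s,a)(t)$, for $u=a_0\cdots a_{n-1}$ let $M_u=M_{a_0}\cdots M_{a_{n-1}}$ (identity for the empty word), and $\mathbb{P}_{\mathcal{A}}(s\xrightarrow{u}t)=M_u(s,t)$. A limit-word is a map $\mathbf{u}:Q\times Q\to\{0,1\}$ such that for every $s$ there is $t$ with $\mathbf{u}(s,t)=1$. The concatenation $\mathbf{u}\cdot\mathbf{v}$ is given by $(\mathbf{u}\cdot\mathbf{v})(s,t)=1$ iff there exists $q$ with $\mathbf{u}(s,q)=1$ and $\mathbf{v}(q,t)=1$. A limit-word $\mathbf{u}$ is idempotent if $\mathbf{u}\cdot\mathbf{u}=\mathbf{u}$; for idempotent $\mathbf{u}$, a state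 $s$ is $\mathbf{u}$-recurrent if for all $t$, $\mathbf{u}(s,t)=1$ implies $\mathbf{u}(t,s)=1$, and the iteration $\mathbf{u}^\sharp$ is defined by $\mathbf{u}^\sharp(s,t)=1$ iff $\mathbf{u}(s,t)=1$ and $t$ is $\mathbf{u}$-recurrent. For $a\in A$, the limit-word $\mathbf{a}$ is given by $\mathbf{a}(s,t)=1$ iff $\Delta(s,a)(t)>0$, and $\mathbf{1}$ is the identity limit-word ($\mathbf{1}(s,t)=1$ iff $s=t$). The Markov monoid of $\mathcal{A}$ is the smallest set of limit-words containing $\{\mathbf{a}\mid a\in A\}\cup\{\mathbf{1}\}$ and closed under concatenation and under iteration of idempotent elements. *)

From HB Require Import structures.
From mathcomp Require Import all_boot all_order all_algebra.
From mathcomp Require Import all_classical all_reals all_analysis.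
Set Implicit Arguments. Unset Strict Implicit. Unset Printing Implicit Defensive.
Import Order.TTheory GRing.Theory Num.Theory.
Import numFieldNormedType.Exports.
Local Open Scope classical_set_scope.
Local Open Scope ring_scope.

Record PA (R : realType) (A Q : finType) := mkPA {
  pa_init : Q;
  pa_final : {set Q};
  pa_delta : Q -> A -> Q -> R;
  pa_delta_ge0 : forall s a t, 0 <= pa_delta s a t;
  pa_delta_sum1 : forall s a, \sum_(t : Q) pa_delta s a t = 1
}.

Fixpoint prob (R : realType) (A Q : finType) (P : PA R A Q) (u : seq A)
  (s t : Q) : R :=
  match u with
  | [::] => (s == t)%:R
  | a :: u' => \sum_(q : Q) pa_delta P s a q * prob P u' q t
  end.

Definition lword (Q : finType) := {ffun Q * Q -> bool}.

Definition is_limit_word (Q : finType) (u : lword Q) : Prop :=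
  forall s, exists t, u (s, t).

Definition lw_concat (Q : finType) (u v : lword Q) : lword Q :=
  [ffun st : Q * Q => [exists q, u (st.1, q) && v (q, st.2)]].

Definition lw_idempotent (Q : finType) (u : lword Q) : Prop :=
  lw_concat u u = u.

Definition lw_recurrent (Q : finType) (u : lword Q) (s : Q) : bool :=
  [forall t, u (s, t) ==> u (t, s)].

Definition lw_iter (Q : finType) (u : lword Q) : lword Q :=
  [ffun st : Q * Q => u st && lw_recurrent u st.2].

Definition lw_letter (R : realType) (A Q : finType) (P : PA R A Q) (a : A)
  : lword Q :=
  [ffun st : Q * Q => 0 < pa_delta P st.1 a st.2].

Definition lw_one (Q : finType) : lword Q :=
  [ffun st : Q * Q => st.1 == st.2].

Inductive markov_monoid (R : realType) (A Q : finType) (P : PA R A Q)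
  : lword Q -> Prop :=
  | mm_letter a : markov_monoid P (lw_letter P a)
  | mm_one : markov_monoid P (lw_one Q)
  | mm_concat u v : markov_monoid P u -> markov_monoid P v ->
      markov_monoid P (lw_concat u v)
  | mm_iter u : markov_monoid P u -> lw_idempotent u ->
      markov_monoid P (lw_iter u).

Definition reifies (R : realType) (A Q : finType) (P : PA R A Q)
  (w : nat -> seq A) (u : lword Q) : Prop :=
  forall s t : Q, exists l : R,
    ((fun n => prob P (w n) s t) @ \oo --> l) /\ (u (s, t) <-> 0 < l).

From mathcomp Require Import all_boot all_order all_algebra.
From mathcomp Require Import all_classical all_reals all_analysis.
From mathcomp Require Import lra.
Set Implicit Arguments. Unset Strict Implicit. Unset Printing Implicit Defensive.
Import Order.TTheory GRing.Theory Num.Theory.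
Import numFieldNormedType.Exports.
Local Open Scope classical_set_scope.
Local Open Scope ring_scope.

(* Call a limit-word [u] approximable when some [d > 0] has the property that
   for every [e > 0] a single word reaches each [t] from each [s] with
   probability at least [d] where [u (s, t)] holds and at most [e] where it
   does not.  Letters and the empty word are approximable, and approximable
   limit-words are closed under concatenation.  For an idempotent [u],
   repeat a word [w] approximating it [k+1] times: from every state [w] enters
   a [u]-recurrent state with probability at least [d], while it leaves the
   recurrent states, or the class of a recurrent [t], with probability at most
   [|Q| e].  Hence after [k+1] rounds the transient states carry mass at most
   [(1-d)^(k+1) + k |Q| e], and the class of a recurrent [t] reached from [s]
   keeps mass at least [d - k |Q| e]; choosing [k] and then [e] shows that the
   iteration of [u] is approximable.  Finally, words approximating [u] to
   precision [e = 1/(m+1)], [m] in [nat], have a subsequence along which all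
   entries converge (Bolzano-Weierstrass), with limits at least [d] on the
   support of [u] and [0] off it. *)

Section RealSums.
Variable R : realType.

Lemma sum_le_card_mul (I : finType) (C : pred I) (F : I -> R) (e : R) :
  0 <= e -> (forall i, C i -> F i <= e) -> \sum_(i | C i) F i <= #|I|%:R * e.
Proof.
move=> e_ge0 le_Fe; apply: (@le_trans _ _ (\sum_(i | C i) e)); first exact: ler_sum.
by rewrite sumr_const -[e *+ _]mulr_natl; apply: ler_wpM2r => //; rewrite ler_nat max_card.
Qed.

Lemma ler_sum_term (I : finType) (C : pred I) (F : I -> R) i :
  (forall j, 0 <= F j) -> C i -> F i <= \sum_(j | C j) F j.
Proof. by move=> F_ge0 Ci; rewrite (bigD1 i) //= ler_wpDr ?sumr_ge0. Qed.

Lemma ler_sum_subpred (I : finType) (C D : pred I) (F : I -> R) :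
  (forall i, 0 <= F i) -> (forall i, C i -> D i) ->
  \sum_(i | C i) F i <= \sum_(i | D i) F i.
Proof.
move=> F_ge0 CD; rewrite [leRHS](bigID C) /= ler_wpDr ?sumr_ge0 //.
by rewrite (eq_bigl C) // => i; apply: andb_idl; exact: CD.
Qed.

Lemma exists_small_mul (c x : R) : 0 <= c -> 0 < x -> exists2 e, 0 < e & c * e <= x.
Proof.
move=> c_ge0 x_gt0; exists (x / (c + 1)); first by rewrite divr_gt0 // ltr_wpDl.
rewrite mulrA ler_pdivrMr ?ltr_wpDl //; nra.
Qed.

Lemma exists_expr_le (x e : R) : 0 <= x < 1 -> 0 < e -> exists k, x ^+ k <= e.
Proof.
move=> /andP[x_ge0 x_lt1] e_gt0.
have /cvgr_le/(_ _ e_gt0) : (GRing.exp x : R^nat) @ \oo --> 0.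
  by apply: cvg_expr; rewrite ger0_norm.
by case=> N _ HN; exists N; apply: HN => /=.
Qed.

Lemma exists_pos_lbound (I : finType) (C : pred I) (F : I -> R) :
  (forall i, C i -> 0 < F i) -> exists2 d, 0 < d & forall i, C i -> d <= F i.
Proof.
move=> F_gt0.
suff [d d_gt0 leF] : exists2 d, 0 < d & forall i, i \in enum I -> C i -> d <= F i.
  by exists d => // i; apply: leF; rewrite mem_enum.
elim: (enum I) => [|i s [d d_gt0 leF]]; first by exists 1.
have [Ci|nCi] := boolP (C i).
  exists (Num.min d (F i)); first by rewrite lt_min d_gt0 F_gt0.
  move=> j; rewrite inE => /orP[/eqP-> _|js Cj]; first by rewrite ge_min lexx orbT.
  by rewrite ge_min leF.
exists d => // j; rewrite inE => /orP[/eqP->|js]; [by rewrite (negbTE nCi)|exact: leF].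
Qed.

End RealSums.

Section ProbOfWords.
Variables (R : realType) (A Q : finType) (P : PA R A Q).

Lemma sum_natr_eq_mull (F : Q -> R) s : \sum_q (s == q)%:R * F q = F s.
Proof.
rewrite (bigD1 s) //= eqxx mul1r big1 ?addr0 // => q /negbTE.
by rewrite eq_sym => ->; rewrite mul0r.
Qed.

Lemma prob_seq1 a s t : prob P [:: a] s t = pa_delta P s a t.
Proof.
rewrite /= (bigD1 t) //= eqxx mulr1 big1 ?addr0 // => q /negbTE ->.
by rewrite mulr0.
Qed.

Lemma prob_cat v w s t :
  prob P (v ++ w) s t = \sum_q prob P v s q * prob P w q t.
Proof.
elim: v s => [|a v IHv] s /=; first by rewrite sum_natr_eq_mull.
under eq_bigr do rewrite IHv mulr_sumr.
rewrite exchange_big /=; apply: eq_bigr => r _.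
by rewrite mulr_suml; apply: eq_bigr => q _; rewrite mulrA.
Qed.

Lemma prob_ge0 w s t : 0 <= prob P w s t.
Proof.
elim: w s => [|a w IHw] s /=; first by rewrite ler0n.
by apply: sumr_ge0 => q _; rewrite mulr_ge0 ?pa_delta_ge0.
Qed.

Lemma prob_sum1 w s : \sum_t prob P w s t = 1.
Proof.
elim: w s => [|a w IHw] s /=.
  by rewrite (eq_bigr _ (fun t _ => esym (mulr1 _))) sum_natr_eq_mull.
rewrite exchange_big /= -(pa_delta_sum1 P s a); apply: eq_bigr => q _.
by rewrite -mulr_sumr IHw mulr1.
Qed.

Lemma sum_prob_le1 (C : pred Q) w s : \sum_(t | C t) prob P w s t <= 1.
Proof.
by rewrite -(prob_sum1 w s) ler_sum_subpred // => t; exact: prob_ge0.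
Qed.

Lemma prob_le1 w s t : prob P w s t <= 1.
Proof. by apply: le_trans (sum_prob_le1 (pred1 t) w s); rewrite big_pred1_eq. Qed.

Lemma sum_prob_predC (C : pred Q) w s :
  \sum_(t | C t) prob P w s t = 1 - \sum_(t | ~~ C t) prob P w s t.
Proof. by rewrite -(prob_sum1 w s) [X in _ = X - _](bigID C) /= addrK. Qed.

Lemma sum_prob_cat (C : pred Q) v w s :
  \sum_(t | C t) prob P (v ++ w) s t =
  \sum_q prob P v s q * \sum_(t | C t) prob P w q t.
Proof.
under eq_bigr do rewrite prob_cat.
by rewrite exchange_big /=; apply: eq_bigr => q _; rewrite mulr_sumr.
Qed.

Lemma flatten_nseqSr (w : seq A) k :
  flatten (nseq k.+2 w) = flatten (nseq k.+1 w) ++ w.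
Proof. by rewrite -addn1 nseqD flatten_cat /= cats0. Qed.

End ProbOfWords.

Section Approximable.
Variables (R : realType) (A Q : finType) (P : PA R A Q).

Definition approximable (u : lword Q) :=
  exists2 d : R, 0 < d & forall e : R, 0 < e -> exists w : seq A, forall s t,
    (u (s, t) -> d <= prob P w s t) /\ (~~ u (s, t) -> prob P w s t <= e).

Lemma approximable_letter a : approximable (lw_letter P a).
Proof.
have [d d_gt0 le_d] := @exists_pos_lbound R _
  (fun st : Q * Q => 0 < pa_delta P st.1 a st.2) _ (fun _ => id).
exists d => // e e_gt0; exists [:: a] => s t; rewrite prob_seq1 ffunE /=.
split; first exact: (le_d (s, t)).
by rewrite -leNgt => /le_trans; apply; exact: ltW.
Qed.

Lemma approximable_one : approximable (lw_one Q).
Proof.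
exists 1 => // e e_gt0; exists [::] => s t; rewrite ffunE /=.
by split=> [->|/negbTE->] //; exact: ltW.
Qed.

Lemma approximable_concat u v :
  approximable u -> approximable v -> approximable (lw_concat u v).
Proof.
move=> [du du_gt0 apx_u] [dv dv_gt0 apx_v].
exists (du * dv) => [|e e_gt0]; first exact: mulr_gt0.
have [e' e'_gt0 le_e'] := exists_small_mul (ler0n R #|Q|) e_gt0.
have [[wu hwu] [wv hwv]] := (apx_u e' e'_gt0, apx_v e' e'_gt0).
exists (wu ++ wv) => s t; rewrite ffunE /= prob_cat; split.
  case/existsP=> q /andP[usq vqt].
  apply: le_trans (ler_sum_term (C := xpredT) _ _) => //= [|r]; last first.
    by rewrite mulr_ge0 ?prob_ge0.
  by apply: ler_pM; [exact: ltW|exact: ltW|exact: (hwu s q).1|exact: (hwv q t).1].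
move=> /existsPn not_uv; apply: le_trans le_e'.
apply: sum_le_card_mul (ltW e'_gt0) _ => q _.
have [nu|nv] := nandP (not_uv q).
  exact: le_trans (ler_piMr (prob_ge0 _ _ _ _) (prob_le1 _ _ _ _)) ((hwu s q).2 nu).
exact: le_trans (ler_piMl (prob_ge0 _ _ _ _) (prob_le1 _ _ _ _)) ((hwv q t).2 nv).
Qed.

Lemma approximable_limit_word u : approximable u -> is_limit_word u.
Proof.
move=> [d d_gt0 apx] s; apply/existsP; apply: contraT => /existsPn not_u.
have half_gt0 : 0 < 2^-1 :> R by rewrite invr_gt0.
have [e e_gt0 le_e] := exists_small_mul (ler0n R #|Q|) half_gt0.
have [w hw] := apx e e_gt0.
suff : 1 <= #|Q|%:R * e by lra.
rewrite -[leLHS](prob_sum1 P w s); apply: sum_le_card_mul (ltW e_gt0) _ => t _.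
exact: (hw s t).2.
Qed.

End Approximable.

Section IdempotentLimitWord.
Variables (Q : finType) (u : lword Q).
Hypothesis u_idem : lw_idempotent u.

Lemma lw_idem_trans a b c : u (a, b) -> u (b, c) -> u (a, c).
Proof. by move=> ab bc; rewrite -u_idem ffunE; apply/existsP; exists b; rewrite ab bc. Qed.

Lemma lw_recurrent_back r y : lw_recurrent u r -> u (r, y) -> u (y, r).
Proof. by move=> /forallP/(_ y)/implyP. Qed.

Lemma lw_recurrent_succ r y : lw_recurrent u r -> u (r, y) -> lw_recurrent u y.
Proof.
move=> rec_r ry; apply/forallP => z; apply/implyP => yz.
exact: lw_idem_trans (lw_recurrent_back rec_r (lw_idem_trans ry yz)) ry.
Qed.

Lemma lw_recurrent_refl r : is_limit_word u -> lw_recurrent u r -> u (r, r).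
Proof.
move=> u_lw rec_r; have [y ry] := u_lw r.
exact: lw_idem_trans ry (lw_recurrent_back rec_r ry).
Qed.

Lemma lw_reach_recurrent s :
  is_limit_word u -> exists2 r, u (s, r) & lw_recurrent u r.
Proof.
move=> u_lw; pose succ x := [set y | u (x, y)]%SET.
have [t0 st0] := u_lw s.
(* A successor [t] of [s] with fewest successors: every successor of [t]
   then has exactly the successors of [t]. *)
case: (@arg_minnP _ t0 (fun t => u (s, t)) (fun t => #|succ t|) st0) => t st t_min.
have succ_eq y : u (t, y) -> succ y = succ t.
  move=> ty; apply/eqP; rewrite eqEcard t_min ?(lw_idem_trans st ty) // andbT.
  by apply/fintype.subsetP => z; rewrite !inE; exact: lw_idem_trans ty.
have [r tr] := u_lw t.
exists r; first exact: lw_idem_trans st tr.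
apply/forallP => y; apply/implyP => ry.
by have := succ_eq y (lw_idem_trans tr ry); move/setP/(_ r); rewrite !inE tr.
Qed.

End IdempotentLimitWord.

Section RepeatedWord.
Variables (R : realType) (A Q : finType) (P : PA R A Q).
Variables (u : lword Q) (w : seq A) (d e : R).
Hypotheses (u_idem : lw_idempotent u) (u_lw : is_limit_word u).
Hypotheses (d_gt0 : 0 < d) (d_le1 : d <= 1) (e_ge0 : 0 <= e).
Hypothesis w_support : forall s t, u (s, t) -> d <= prob P w s t.
Hypothesis w_offsupport : forall s t, ~~ u (s, t) -> prob P w s t <= e.

Local Notation n := (#|Q|%:R : R).
Local Notation M := (prob P w).
Local Notation N k := (prob P (flatten (nseq k.+1 w))).
Local Notation recurrent := (lw_recurrent u).

Let n1_ge1 : 1 <= n + 1. Proof. by rewrite lerDr. Qed.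

Lemma repeat_offsupport k s t : ~~ u (s, t) -> N k s t <= (n + 1) ^+ k.+1 * e.
Proof.
elim: k s t => [|k IHk] s t not_ust.
  by rewrite /= cats0 expr1 (le_trans (w_offsupport not_ust)) // ler_peMl.
rewrite flatten_nseqSr prob_cat exprS -mulrA; set X := (n + 1) ^+ k.+1 * e.
have X_ge_e : e <= X by rewrite ler_peMl // exprn_ege1.
have X_ge0 : 0 <= X := le_trans e_ge0 X_ge_e.
apply: le_trans (_ : n * X <= _); last by rewrite ler_wpM2r // lerDl.
apply: sum_le_card_mul X_ge0 _ => q _; have [usq|not_usq] := boolP (u (s, q)).
  have not_uqt : ~~ u (q, t) by apply: contra not_ust; exact: lw_idem_trans usq.
  apply: le_trans X_ge_e; apply: le_trans (w_offsupport not_uqt).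
  by rewrite ler_piMl ?prob_ge0 ?prob_le1.
by apply: le_trans (IHk _ _ not_usq); rewrite ler_piMr ?prob_ge0 ?prob_le1.
Qed.

Lemma step_transient_mass q' : \sum_(q | ~~ recurrent q) M q' q <= 1 - d.
Proof.
have [r ur rec_r] := lw_reach_recurrent u_idem q' u_lw.
rewrite sum_prob_predC lerD2l lerN2; apply: le_trans (w_support ur) _.
by apply: ler_sum_term; rewrite ?negbK // => q; exact: prob_ge0.
Qed.

Lemma step_recurrent_leak q' :
  recurrent q' -> \sum_(q | ~~ recurrent q) M q' q <= n * e.
Proof.
move=> rec_q'; apply: sum_le_card_mul e_ge0 _ => q not_rec_q.
by apply: w_offsupport; apply: contra not_rec_q; exact: lw_recurrent_succ.
Qed.

Lemma repeat_transient_mass k s :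
  \sum_(q | ~~ recurrent q) N k s q <= (1 - d) ^+ k.+1 + k%:R * n * e.
Proof.
elim: k s => [|k IHk] s.
  by rewrite /= cats0 !mul0r addr0 expr1 step_transient_mass.
rewrite flatten_nseqSr sum_prob_cat (bigID recurrent) /=.
have leak : \sum_(q | recurrent q) N k s q *
    \sum_(t | ~~ recurrent t) M q t <= n * e.
  apply: le_trans (_ : \sum_(q | recurrent q) N k s q * (n * e) <= _).
    by apply: ler_sum => q rec_q; rewrite ler_wpM2l ?prob_ge0 ?step_recurrent_leak.
  by rewrite -mulr_suml ler_piMl ?mulr_ge0 ?sum_prob_le1.
have stay : \sum_(q | ~~ recurrent q) N k s q *
    \sum_(t | ~~ recurrent t) M q t <= ((1 - d) ^+ k.+1 + k%:R * n * e) * (1 - d).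
  apply: le_trans (_ : \sum_(q | ~~ recurrent q) N k s q * (1 - d) <= _).
    by apply: ler_sum => q _; rewrite ler_wpM2l ?prob_ge0 ?step_transient_mass.
  by rewrite -mulr_suml ler_wpM2r ?subr_ge0 ?IHk.
apply: le_trans (lerD leak stay) _.
have : 0 <= d * (k%:R * n * e) by apply: mulr_ge0; [exact: ltW | rewrite !mulr_ge0].
rewrite [_ ^+ k.+2]exprS -natr1; lra.
Qed.

Lemma step_class_mass t q' :
  u (t, q') -> 1 - n * e <= \sum_(q | u (t, q)) M q' q.
Proof.
move=> tq'; rewrite sum_prob_predC lerD2l lerN2.
apply: sum_le_card_mul e_ge0 _ => q not_tq; apply: w_offsupport.
by apply: contra not_tq; exact: lw_idem_trans.
Qed.

Lemma repeat_class_mass t k s : recurrent t -> u (s, t) ->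
  d - k%:R * n * e <= \sum_(q | u (t, q)) N k s q.
Proof.
move=> rec_t ust; elim: k => [|k IHk].
  rewrite /= cats0 !mul0r subr0; apply: le_trans (w_support ust) _.
  by apply: ler_sum_term; [move=> q; exact: prob_ge0 | exact: lw_recurrent_refl].
rewrite flatten_nseqSr sum_prob_cat.
move: IHk; set m := \sum_(q | u (t, q)) N k s q => IHk.
apply: le_trans (_ : m * (1 - n * e) <= _).
  have : 0 <= (1 - m) * (n * e) by rewrite !mulr_ge0 ?subr_ge0 ?sum_prob_le1.
  rewrite -natr1; lra.
rewrite /m mulr_suml.
apply: le_trans (_ : \sum_(q | u (t, q)) N k s q * \sum_(r | u (t, r)) M q r <= _).
  by apply: ler_sum => q tq; rewrite ler_wpM2l ?prob_ge0 ?step_class_mass.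
apply: ler_sum_subpred => // q.
by rewrite mulr_ge0 ?prob_ge0 ?sumr_ge0 // => r _; exact: prob_ge0.
Qed.

Lemma repeat_support t k s : recurrent t -> u (s, t) ->
  d * (d - k%:R * n * e) <= N k s t.
Proof.
move=> rec_t ust; case: k => [|k].
  rewrite /= cats0 !mul0r subr0; apply: le_trans (w_support ust).
  exact: ler_piMl (ltW d_gt0) d_le1.
rewrite flatten_nseqSr prob_cat.
apply: le_trans (_ : \sum_(q | u (t, q)) N k s q * d <= _); last first.
  apply: le_trans (_ : \sum_(q | u (t, q)) N k s q * M q t <= _).
    apply: ler_sum => q tq; rewrite ler_wpM2l ?prob_ge0 // w_support //.
    exact: lw_recurrent_back.
  by apply: ler_sum_subpred => // q; rewrite mulr_ge0 ?prob_ge0.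
rewrite -mulr_suml [leRHS]mulrC ler_pM2l //.
apply: le_trans (repeat_class_mass k rec_t ust).
have : 0 <= n * e by rewrite mulr_ge0.
rewrite -natr1; nra.
Qed.

Lemma repeat_iter_bounds k s t :
  let c := (n + 1) ^+ k.+1 + k%:R * n in
  (lw_iter u (s, t) -> d * (d - c * e) <= N k s t) /\
  (~~ lw_iter u (s, t) -> N k s t <= (1 - d) ^+ k.+1 + c * e).
Proof.
move=> c; have d_ge0 := ltW d_gt0.
have le_kne : k%:R * n * e <= c * e by rewrite ler_wpM2r // lerDr exprn_ge0.
rewrite ffunE; split.
  case/andP=> ust rec_t; apply: le_trans (repeat_support k rec_t ust).
  by rewrite ler_wpM2l // lerD2l lerN2.
rewrite negb_and => /orP[not_ust|/= not_rec_t].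
  apply: le_trans (repeat_offsupport k not_ust) _.
  rewrite ler_wpDl ?exprn_ge0 ?subr_ge0 // ler_wpM2r // lerDl.
  by rewrite mulr_ge0.
apply: le_trans (_ : \sum_(q | ~~ recurrent q) N k s q <= _).
  by apply: (ler_sum_term (C := fun q => ~~ recurrent q)) => // q; exact: prob_ge0.
by apply: le_trans (repeat_transient_mass k s) _; rewrite lerD2l.
Qed.

End RepeatedWord.

Lemma approximable_iter (R : realType) (A Q : finType) (P : PA R A Q) u :
  lw_idempotent u -> approximable P u -> approximable P (lw_iter u).
Proof.
move=> u_idem apx_u; have u_lw := approximable_limit_word apx_u.
case: apx_u => d0 d0_gt0 apx_u; pose d := Num.min d0 1.
have d_gt0 : 0 < d by rewrite lt_min d0_gt0 ltr01.
have [d_le_d0 d_le1] : d <= d0 /\ d <= 1 by rewrite !ge_min !lexx orbT.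
exists (d * d / 2) => [|eps eps_gt0]; first by rewrite !divr_gt0 ?mulr_gt0.
have [k le_eps] : exists k, (1 - d) ^+ k <= eps / 2.
  by apply: exists_expr_le; [apply/andP; split; lra | lra].
pose c : R := (#|Q|%:R + 1) ^+ k.+1 + k%:R * #|Q|%:R.
have c_ge0 : 0 <= c by rewrite addr_ge0 ?exprn_ge0 ?mulr_ge0 // addr_ge0.
have m_gt0 : 0 < Num.min eps d / 2 by rewrite divr_gt0 // lt_min eps_gt0.
have [e e_gt0 le_ce] := exists_small_mul c_ge0 m_gt0.
have [le_ce_eps le_ce_d] : c * e <= eps / 2 /\ c * e <= d / 2.
  by split; apply: le_trans le_ce _; rewrite ler_pM2r ?invr_gt0 // ge_min lexx ?orbT.
have [w hw] := apx_u e e_gt0.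
have w_support s t : u (s, t) -> d <= prob P w s t.
  by move=> /(hw s t).1; exact: le_trans.
exists (flatten (nseq k.+1 w)) => s t.
have [lo hi] := repeat_iter_bounds u_idem u_lw d_gt0 d_le1 (ltW e_gt0)
  w_support (fun s t => (hw s t).2) k s t.
rewrite -/c in lo hi.
split => [/lo|/hi] bound.
  by apply: le_trans bound; rewrite -mulrA ler_pM2l //; lra.
apply: le_trans bound _.
have : (1 - d) ^+ k.+1 <= (1 - d) ^+ k.
  by rewrite exprS ler_piMl ?exprn_ge0 ?subr_ge0 //; lra.
lra.
Qed.

Lemma approximable_markov_monoid (R : realType) (A Q : finType) (P : PA R A Q) u :
  markov_monoid P u -> approximable P u.
Proof.
elim=> [a||v w _ apx_v _ apx_w|v _ apx_v v_idem].
- exact: approximable_letter.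
- exact: approximable_one.
- exact: approximable_concat.
- exact: approximable_iter.
Qed.

Lemma increasing_seq_cvg (phi : nat -> nat) : increasing_seq phi -> phi @ \oo --> \oo.
Proof.
move=> /unstable.mono_leq_infl phi_ge S [N _ SN]; exists N => // n /= Nn.
exact/SN/(leq_trans Nn).
Qed.

Lemma bounded_fun_le (R : realType) (g : nat -> R) (M : R) :
  (forall n, `|g n| <= M) -> bounded_fun g.
Proof.
move=> g_le; apply: (sub_boundedl (globally_filter _) _ (bounded_cst M setT)).
by apply: nearW => n; exact: le_trans (g_le n) (ler_norm M).
Qed.

Lemma cvgn_subseq_finite (R : realType) (I : finType) (f : nat -> I -> R) (M : R) :
  (forall n i, `|f n i| <= M) ->
  exists2 phi : nat -> nat, increasing_seq phi & forall i, cvgn (fun n => f (phi n) i).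
Proof.
move=> f_bnd.
suff [phi phi_incr cvg_phi] : exists2 phi : nat -> nat, increasing_seq phi &
    forall i, i \in enum I -> cvgn (fun n => f (phi n) i).
  by exists phi => // i; apply: cvg_phi; rewrite mem_enum.
elim: (enum I) => [|i s [phi phi_incr cvg_phi]]; first by exists id.
have [psi psi_incr cvg_psi] :=
  bolzano_weierstrass (bounded_fun_le (fun n => f_bnd (phi n) i)).
exists (phi \o psi) => [|j]; first by move=> m n /=; rewrite phi_incr; exact: psi_incr.
rewrite inE => /predU1P[->|js]; first exact: cvg_psi.
apply/cvg_ex; exists (limn (fun n => f (phi n) j)).
exact: cvg_comp (increasing_seq_cvg psi_incr) (cvg_phi j js).
Qed.

Lemma approximable_reifies (R : realType) (A Q : finType) (P : PA R A Q) u :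
  approximable P u -> exists w : nat -> seq A, reifies P w u.
Proof.
move=> [d d_gt0 apx].
have [W hW] := choice (fun n => apx _ (@harmonic_gt0 R n)).
have W_bnd n (st : Q * Q) : `|prob P (W n) st.1 st.2| <= 1.
  by rewrite ger0_norm ?prob_ge0 ?prob_le1.
have [phi phi_incr cvg_phi] := cvgn_subseq_finite W_bnd.
exists (W \o phi) => s t; have /= cvg_st := cvg_phi (s, t).
exists (limn (fun n => prob P (W (phi n)) s t)); split => //; split=> [ust|l_gt0].
  apply: lt_le_trans d_gt0 (limr_ge cvg_st _).
  by apply: nearW => n; exact: (hW (phi n) s t).1.
apply/negPn/negP => not_ust.
have harmonic_phi : harmonic \o phi @ \oo --> (0 : R).
  exact: cvg_comp (increasing_seq_cvg phi_incr) cvg_harmonic.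
suff : limn (fun n => prob P (W (phi n)) s t) <= 0 by lra.
rewrite -(cvg_lim _ harmonic_phi) //; apply: ler_lim cvg_st (cvgP _ harmonic_phi) _.
by apply: nearW => n; exact: (hW (phi n) s t).2.
Qed.

Theorem theorem2p10 (R : realType) (A Q : finType) (P : PA R A Q)
  (u : lword Q) :
  markov_monoid P u -> exists w : nat -> seq A, reifies P w u.
Proof. by move=> /approximable_markov_monoid/approximable_reifies. Qed.
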